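(* There exist constants $c_3,c_4>0$ such that for every Dobrushin $\mathbb{H}$-domain $(\mathcal{D},a,b)$: (i) if $d_1(0)$ denotes the distance between the origin and the wired arc, then $\mathbf{HM}_\bullet(B_0)\le c_3\,\dfrac{1}{d_1(0)}$; (ii) if the segment $l_n(k)=\{k\}\times\llbracket0,n\rrbracket$ disconnects the wired arc from the origin inside $\mathcal{D}$, then $\mathbf{HM}_\bullet(B_0)\le c_4\,\dfrac{n}{|k|^2}$.
   Context: $\llbracket s,t\rrbracket=[s,t]\cap\mathbb{Z}$; $\mathbb{H}=\{(x_1,x_2)\in\mathbb{Z}^2:x_2\ge0\}$. A Dobrushin domain $(\mathcal{D},a,b)$ is a subgraph of $\mathbb{Z}^2$ (possibly infinite here) bounded by a self-avoiding boundary curve of boundary edges, with two boundary vertices $a,b$; the free arc is the counterclockwise boundary arc from $a$ to $b$, the wired arc the one from $b$ to $a$. It is a Dobrushin $\mathbb{H}$-domain if its medial graph is contained in the medial lattice of $\mathbb{H}$ and the origin lies on the free arc. Medial lattice: vertices of $\mathbb{Z}^2$ are black, vertices of $(\tfrac12,\tfrac12)+\mathbb{Z}^2$ are white; each is replaced by the diamond $\{z:|\mathrm{Re}(z-v)|+|\mathrm{Im}(z-v)|\le1/2\}$. Two black faces are adjacent if the corresponding primal vertices are neighbours. $\mathcal{D}_\diamond$ consists of the diamonds intersecting the interior of the domain together with the white diamonds touching the free arc; these white diamonds form the free arc of $\mathcal{D}_\diamond$ and the black diamonds of the wired-arc vertices form its wired arc. The extended domain adds a layer of white diamonds adjacent to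 the black diamonds of the wired arc and a layer of black diamonds adjacent to the white diamonds of the free arc (as new faces). $X^B_\bullet$ is the continuous-time random walk on black faces started at $B$, jumping at rate $1$ to adjacent black faces except at rate $\rho=(\sqrt2+1)/2$ to adjacent added black faces; $\mathbf{HM}_\bullet(B)$ is the probability that it hits the wired arc before the added black layer. $B_0$ is the black diamond of the origin. *)

From HB Require Import structures.
From mathcomp Require Import all_boot all_order all_algebra.
From mathcomp Require Import all_classical all_reals.
From mathcomp Require Import Rstruct.
Set Implicit Arguments.
Unset Strict Implicit.
Unset Printing Implicit Defensive.
Import Order.TTheory GRing.Theory Num.Theory.
Local Open Scope classical_set_scope.
Local Open Scope ring_scope.

Definition R := Rdefinitions.R.

(* Points of Z^2: primal vertices (black faces of the medial lattice).
   A face (unit square) is indexed by its lower-left corner g, i.e. it is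
   [g.1, g.1+1] x [g.2, g.2+1]; its white diamond is centred at g+(1/2,1/2). *)
Definition Z2 := (int * int)%type.

Definition origin : Z2 := (0%R, 0%R).

Definition nbr (u v : Z2) : bool := (`|u.1 - v.1|%N + `|u.2 - v.2|%N == 1)%N.

Definition nbrs (u : Z2) : seq Z2 :=
  [:: (u.1 + 1, u.2); (u.1 - 1, u.2); (u.1, u.2 + 1); (u.1, u.2 - 1)].

Definition corner (g v : Z2) : Prop :=
  v = g \/ v = (g.1 + 1, g.2) \/ v = (g.1, g.2 + 1) \/ v = (g.1 + 1, g.2 + 1).

(* A domain is given by its (possibly infinite) set F of faces; the region is
   the union of the closed faces.  Oriented boundary edge u -> w: an edge of
   Z^2 with exactly one adjacent face in F, oriented so that F is on the left
   (counterclockwise orientation of the boundary of the domain). *)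
Definition bedge (F : set Z2) (u w : Z2) : Prop :=
  [\/ w = (u.1 + 1, u.2) /\ F (u.1, u.2) /\ ~ F (u.1, u.2 - 1),
      w = (u.1 - 1, u.2) /\ F (u.1 - 1, u.2 - 1) /\ ~ F (u.1 - 1, u.2),
      w = (u.1, u.2 - 1) /\ F (u.1, u.2 - 1) /\ ~ F (u.1 - 1, u.2 - 1) |
      w = (u.1, u.2 + 1) /\ F (u.1 - 1, u.2) /\ ~ F (u.1, u.2)].

Definition bd (F : set Z2) (u : Z2) : Prop := exists w, bedge F u w.

Fixpoint bsteps (F : set Z2) (n : nat) (u v : Z2) : Prop :=
  match n with
  | 0 => u = v
  | n.+1 => exists w, bedge F u w /\ bsteps F n w v
  end.

Definition breach (F : set Z2) (u v : Z2) : Prop := exists n, bsteps F n u v.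

(* Oriented edge u -> w lies on the counterclockwise boundary arc from p to q.
   Either q is reached from p along the boundary (first time after k steps)
   and the arc consists of the first k edges, or (infinite boundary, q lies
   "behind" p) the arc goes from p to infinity and comes back to q. *)
Definition arcE (F : set Z2) (p q u w : Z2) : Prop :=
  bedge F u w /\
  ((exists k, bsteps F k p q /\ (forall i, (i < k)%N -> ~ bsteps F i p q) /\
      exists j, (j < k)%N /\ bsteps F j p u)
   \/ (~ breach F p q /\ (breach F p u \/ breach F w q))).

Definition arcV (F : set Z2) (p q v : Z2) : Prop :=
  v = p \/ v = q \/ exists w, arcE F p q v w \/ arcE F p q w v.

(* vertices of the domain = black faces of D_diamond *)
Definition Vb (F : set Z2) : set Z2 := [set v | exists g, F g /\ corner g v].

Record dobrushinH (F : set Z2) (a b : Z2) : Prop := {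
  dh_simple : forall u w1 w2, bedge F u w1 -> bedge F u w2 -> w1 = w2;
  dh_connected : forall u v, bd F u -> bd F v -> breach F u v \/ breach F v u;
  dh_a : bd F a;
  dh_b : bd F b;
  dh_ab : a <> b;
  dh_H : forall v, Vb F v -> 0 <= v.2;
  dh_origin : arcV F a b origin }.

Definition wired (F : set Z2) (a b : Z2) : set Z2 := [set v | arcV F b a v].

(* added black layer: black diamonds adjacent to white diamonds of the free
   arc (faces adjacent to an edge of the free arc), not already in D_diamond *)
Definition added (F : set Z2) (a b : Z2) : set Z2 :=
  [set v | ~ Vb F v /\ exists g u w, arcE F a b u w /\ corner g u /\
                                     corner g w /\ corner g v].

Definition rho : R := (Num.sqrt 2 + 1) / 2.

Definition rate (F : set Z2) (a b : Z2) (C : Z2) : R :=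
  if `[< Vb F C >] then 1 else if `[< added F a b C >] then rho else 0.

(* hstep n B = probability that the walk started at B hits the wired arc
   before the added layer within n jumps (embedded jump chain of X^B) *)
Fixpoint hstep (F : set Z2) (a b : Z2) (n : nat) (B : Z2) : R :=
  if `[< wired F a b B >] then 1 else
  match n with
  | 0 => 0
  | n.+1 =>
    if `[< Vb F B >] then
      let tot := \sum_(C <- nbrs B) rate F a b C in
      \sum_(C <- nbrs B) (rate F a b C / tot) * hstep F a b n C
    else 0
  end.

Definition HM (F : set Z2) (a b : Z2) (B : Z2) : R :=
  sup (range (fun n => hstep F a b n B)).

Definition dist0 (v : Z2) : R := Num.sqrt ((v.1)%:~R ^+ 2 + (v.2)%:~R ^+ 2).
Definition d1 (F : set Z2) (a b : Z2) : R := inf (dist0 @` wired F a b).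

Definition in_seg (n : nat) (k : int) (v : Z2) : bool :=
  (v.1 == k) && (0 <= v.2 <= n%:Z).

Definition disconnects (F : set Z2) (a b : Z2) (n : nat) (k : int) : Prop :=
  forall s : seq Z2,
    (forall v, v \in origin :: s -> Vb F v) ->
    path nbr origin s ->
    wired F a b (last origin s) ->
    has (in_seg n k) (origin :: s).

(* HM is dominated by every function f which is at least 1 on the wired arc
   and nonnegative and superharmonic for the simple random walk at the faces
   of D off the wired arc: at such a face all four neighbours lie in D or in
   the added layer, so the total jump rate is at least 4, and the walk never
   reaches the wired arc through the added layer.  For (i), with d = d_1(0),
   take the harmonic polynomial (8dY + 2X^2 - 2Y^2)/d^2, Y = y + 1, capped at
   1 beyond distance d: it is O(1/d) at the origin.  For (ii), restrict to the
   faces reachable from the origin without crossing l_n(k) and take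
   4nY/((x-k)^2 + Y^2 + 3), which is superharmonic in the half plane, at
   least 1 on l_n(k) if n >= 1, and 4n/(k^2 + 4) at the origin.  When n = 0
   the single point (k,0) separates nothing, so the wired arc is unreachable
   and HM = 0. *)

From mathcomp Require Import all_boot all_order all_algebra.
From mathcomp Require Import all_classical all_reals Rstruct.
From mathcomp Require Import ring lra zify.
Set Implicit Arguments.
Unset Strict Implicit.
Import Order.TTheory GRing.Theory Num.Theory.
Local Open Scope ring_scope.

Lemma ex_minP (P : nat -> Prop) :
  (exists n, P n) -> exists n, P n /\ forall i, (i < n)%N -> ~ P i.
Proof.
move=> exP; have exP' : exists n, `[< P n >] by case: exP => n Pn; exists n; apply/asboolP.
case: (ex_minnP exP') => n /asboolP Pn nmin; exists n; split=> // i lt_in Pi.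
by have := nmin i (asboolT Pi); rewrite leqNgt lt_in.
Qed.

Lemma corner_of (g v : Z2) :
  0 <= v.1 - g.1 <= 1 -> 0 <= v.2 - g.2 <= 1 -> corner g v.
Proof.
case: g v => [gx gy] [vx vy] /= hx hy.
have [->|->] : vx = gx \/ vx = gx + 1 by lia.
all: have [->|->] : vy = gy \/ vy = gy + 1 by lia.
all: rewrite /corner /=; tauto.
Qed.

Lemma nbrs_sym (u v : Z2) : v \in nbrs u -> u \in nbrs v.
Proof.
case: u => x y; rewrite /nbrs !inE => /or4P [] /eqP ->;
by rewrite /= ?addrK ?subrK eqxx ?orbT.
Qed.

Lemma nbr_of_nbrs (u v : Z2) : v \in nbrs u -> nbr u v.
Proof.
by case: u => x y; rewrite /nbrs !inE => /or4P [] /eqP -> /=; rewrite /nbr /=; apply/eqP; lia.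
Qed.

Lemma sum_filter_le (T : eqType) (s : seq T) (P : pred T) (f g : T -> R) :
  (forall i, i \in s -> P i -> f i <= g i) -> (forall i, i \in s -> 0 <= g i) ->
  \sum_(i <- s | P i) f i <= \sum_(i <- s) g i.
Proof.
move=> fg g0; rewrite big_mkcond big_seq [leRHS]big_seq; apply: ler_sum => i si.
by case: ifP => Pi; [apply: fg | apply: g0].
Qed.

Lemma dist0_sqr v : dist0 v ^+ 2 = v.1%:~R ^+ 2 + v.2%:~R ^+ 2.
Proof. by rewrite sqr_sqrtr // addr_ge0 ?sqr_ge0. Qed.

Lemma rho_ge1 : 1 <= rho.
Proof.
rewrite /rho ler_pdivlMr // mul1r.
suff : 1 <= Num.sqrt (2 : R) by lra.
by rewrite -{1}sqrtr1; apply: ler_wsqrtr; lra.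
Qed.

(** * The boundary of a domain *)

Section Boundary.
Variable F : set Z2.

Lemma bedgeR {x y} : F (x,y) -> ~ F (x,y-1) -> bedge F (x,y) (x+1,y).
Proof. by move=> *; apply: Or41. Qed.
Lemma bedgeL {x y} : F (x-1,y-1) -> ~ F (x-1,y) -> bedge F (x,y) (x-1,y).
Proof. by move=> *; apply: Or42. Qed.
Lemma bedgeD {x y} : F (x,y-1) -> ~ F (x-1,y-1) -> bedge F (x,y) (x,y-1).
Proof. by move=> *; apply: Or43. Qed.
Lemma bedgeU {x y} : F (x-1,y) -> ~ F (x,y) -> bedge F (x,y) (x,y+1).
Proof. by move=> *; apply: Or44. Qed.

Lemma bedge_in (x y : int) u : bedge F u (x,y) <->
  [\/ u = (x-1,y) /\ F (x-1,y) /\ ~ F (x-1,y-1),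
      u = (x+1,y) /\ F (x,y-1) /\ ~ F (x,y),
      u = (x,y+1) /\ F (x,y) /\ ~ F (x-1,y) |
      u = (x,y-1) /\ F (x-1,y-1) /\ ~ F (x,y-1)].
Proof.
case: u => ux uy; split;
by case=> -[[-> ->] [? ?]]; [apply: Or41 | apply: Or42 | apply: Or43 | apply: Or44];
   rewrite ?addrK ?subrK.
Qed.

Lemma bedge_nbrs u w : bedge F u w -> w \in nbrs u.
Proof. by case: u => x y; case=> -[-> _]; rewrite /nbrs !inE eqxx ?orbT. Qed.

Lemma bedge_Vb u w : bedge F u w -> Vb F u /\ Vb F w.
Proof.
case: u => x y; case=> -[-> [h _]];
by split; (eexists; split; [exact: h | apply: corner_of => /=; lia]).
Qed.

Lemma bedge_has_pred v w : bedge F v w -> exists u, bedge F u v.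
Proof.
case: v => x y h; rewrite /bd; setoid_rewrite bedge_in.
have [?|?] := pselect (F (x,y)); have [?|?] := pselect (F (x-1,y));
have [?|?] := pselect (F (x-1,y-1)); have [?|?] := pselect (F (x,y-1));
try by case: h => -[_ []].
all: eexists; first [ by apply: Or41 | by apply: Or42 | by apply: Or43 | by apply: Or44 ].
Qed.

Lemma Vb_cases x y : Vb F (x,y) -> [\/ F (x,y), F (x-1,y), F (x,y-1) | F (x-1,y-1)].
Proof.
case=> -[gx gy] [h]; rewrite /corner /=.
case=> [[-> ->]|[[-> ->]|[[-> ->]|[-> ->]]]].
- exact: Or41.
- by apply: Or42; rewrite addrK.
- by apply: Or43; rewrite addrK.
- by apply: Or44; rewrite !addrK.
Qed.

(* A face shared by (x,y) and its neighbour C outside D is adjacent to a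
   boundary edge at (x,y).  The faces around (x,y) are named NE = (x,y),
   NW = (x-1,y), SW = (x-1,y-1) and SE = (x,y-1). *)
Lemma bedge_near_exit x y C : Vb F (x,y) -> C \in nbrs (x,y) -> ~ Vb F C ->
  exists g u w, [/\ bedge F u w, (x,y) = u \/ (x,y) = w,
                    corner g u, corner g w & corner g C].
Proof.
move=> vB hC nC; have nF g : corner g C -> ~ F g by move=> c f; apply: nC; exists g.
move: hC nF => {nC}; rewrite /nbrs !inE => /or4P [] /eqP -> nF.
- have nNE : ~ F (x,y) by apply: nF; apply: corner_of => /=; lia.
  have nSE : ~ F (x,y-1) by apply: nF; apply: corner_of => /=; lia.
  have [fNW|nNW] := pselect (F (x-1,y)).
    exists (x,y), (x,y), (x,y+1); split; [exact: bedgeU | by left | ..];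
    by apply: corner_of => /=; lia.
  have fSW : F (x-1,y-1) by case/Vb_cases: vB.
  exists (x,y-1), (x,y-1), (x,y); split; [|by right|..]; try by apply: corner_of => /=; lia.
  by move: (@bedgeU x (y-1)); rewrite subrK; apply.
- have nNW : ~ F (x-1,y) by apply: nF; apply: corner_of => /=; lia.
  have nSW : ~ F (x-1,y-1) by apply: nF; apply: corner_of => /=; lia.
  have [fNE|nNE] := pselect (F (x,y)).
    exists (x-1,y), (x,y+1), (x,y); split; [|by right|..]; try by apply: corner_of => /=; lia.
    by move: (@bedgeD x (y+1)); rewrite addrK; apply.
  have fSE : F (x,y-1) by case/Vb_cases: vB.
  exists (x-1,y-1), (x,y), (x,y-1); split; [exact: bedgeD | by left | ..];
  by apply: corner_of => /=; lia.
- have nNE : ~ F (x,y) by apply: nF; apply: corner_of => /=; lia.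
  have nNW : ~ F (x-1,y) by apply: nF; apply: corner_of => /=; lia.
  have [fSE|nSE] := pselect (F (x,y-1)).
    exists (x,y), (x+1,y), (x,y); split; [|by right|..]; try by apply: corner_of => /=; lia.
    by move: (@bedgeL (x+1) y); rewrite addrK; apply.
  have fSW : F (x-1,y-1) by case/Vb_cases: vB.
  exists (x-1,y), (x,y), (x-1,y); split; [exact: bedgeL | by left | ..];
  by apply: corner_of => /=; lia.
- have nSE : ~ F (x,y-1) by apply: nF; apply: corner_of => /=; lia.
  have nSW : ~ F (x-1,y-1) by apply: nF; apply: corner_of => /=; lia.
  have [fNE|nNE] := pselect (F (x,y)).
    exists (x,y-1), (x,y), (x+1,y); split; [exact: bedgeR | by left | ..];
    by apply: corner_of => /=; lia.
  have fNW : F (x-1,y) by case/Vb_cases: vB.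
  exists (x-1,y-1), (x-1,y), (x,y); split; [|by right|..]; try by apply: corner_of => /=; lia.
  by move: (@bedgeR (x-1) y); rewrite subrK; apply.
Qed.

Lemma bsteps_add i j p x y :
  bsteps F i p x -> bsteps F j x y -> bsteps F (i + j) p y.
Proof.
elim: i p => [|i IH] p /=; first by move=> ->.
by case=> w [e h] h2; exists w; split=> //; apply: IH.
Qed.

Lemma bsteps_split i j p y :
  bsteps F (i + j) p y -> exists x, bsteps F i p x /\ bsteps F j x y.
Proof.
elim: i p => [|i IH] p /=; first by move=> h; exists p.
by case=> w [e /IH [x [h1 h2]]]; exists x; split=> //; exists w.
Qed.

Lemma bsteps_last i p y : bsteps F i.+1 p y -> exists x, bsteps F i p x /\ bedge F x y.
Proof. by rewrite -addn1 => /bsteps_split [x [h1 [w [e <-]]]]; exists x. Qed.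

Lemma bsteps_iter N m p : bsteps F N p p -> bsteps F (m * N) p p.
Proof. by move=> h; elim: m => [|m IH] //=; rewrite mulSn; apply: bsteps_add h IH. Qed.

Lemma arcE_first_reach p q u w j : bedge F u w -> bsteps F j p u ->
  (forall k, bsteps F k p q -> (j < k)%N) -> arcE F p q u w.
Proof.
move=> e hj first; split=> //.
case: (pselect (breach F p q)) => [/ex_minP [k [hk kmin]] | npq].
- by left; exists k; split=> //; split=> //; exists j; split=> //; apply: first.
- by right; split=> //; left; exists j.
Qed.

Lemma arcV_Vb p q v : bd F p -> bd F q -> arcV F p q v -> Vb F v.
Proof.
move=> [wp ep] [wq eq]; case=> [->|[->|[w [[e _]|[e _]]]]].
- by case: (bedge_Vb ep).
- by case: (bedge_Vb eq).
- by case: (bedge_Vb e).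
- by case: (bedge_Vb e).
Qed.

Hypothesis bedge_det : forall {u w1 w2}, bedge F u w1 -> bedge F u w2 -> w1 = w2.

(* Two distinct incoming boundary edges at a vertex force two distinct
   outgoing ones. *)
Lemma bedge_inj u1 u2 v : bedge F u1 v -> bedge F u2 v -> u1 = u2.
Proof.
case: v => x y /bedge_in h1 /bedge_in h2.
case: h1 => -[-> [f1 n1]]; case: h2 => -[-> [f2 n2]] //; try contradiction; exfalso.
- by have [] := bedge_det (bedgeU f1 n2) (bedgeD f2 n1); lia.
- by have [] := bedge_det (bedgeU f2 n1) (bedgeD f1 n2); lia.
- by have [] := bedge_det (bedgeR f1 n2) (bedgeL f2 n1); lia.
- by have [] := bedge_det (bedgeR f2 n1) (bedgeL f1 n2); lia.
Qed.

Lemma bsteps_det i p x y : bsteps F i p x -> bsteps F i p y -> x = y.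
Proof.
elim: i p => [|i IH] p /=; first by move=> <- <-.
by case=> w [e h] [w' [e' h']]; move: h'; rewrite -(bedge_det e e'); apply: IH.
Qed.

Lemma bsteps_back i x y p : bsteps F i x p -> bsteps F i y p -> x = y.
Proof.
elim: i p => [|i IH] p /=; first by move=> -> ->.
move=> /bsteps_last [z [h1 e1]] /bsteps_last [z' [h2 e2]].
by move: h2; rewrite -(bedge_inj e1 e2); apply: IH.
Qed.

(* Go m times around the cycle through p: the point m steps before the end
   is u, since boundary predecessors are unique. *)
Lemma bsteps_cycle_reach N m u p :
  (0 < N)%N -> bsteps F N p p -> bsteps F m u p -> breach F p u.
Proof.
move=> N_gt0 cyc hm; have le_m : (m <= m * N)%N by rewrite leq_pmulr.
move: (bsteps_iter m cyc); rewrite -(subnK le_m) => /bsteps_split [x [hx1 hx2]].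
by exists (m * N - m)%N; rewrite (bsteps_back hm hx2).
Qed.

Hypothesis bd_connected : forall {u v}, bd F u -> bd F v -> breach F u v \/ breach F v u.

Lemma bedge_on_arcs p q u w : bd F p -> p <> q -> breach F p q -> bedge F u w ->
  arcE F p q u w \/ arcE F q p u w.
Proof.
move=> bp npq /ex_minP [k [hk kmin]] e.
have k_gt0 : (0 < k)%N by case: k hk {kmin} => // ->.
have k_min k' : bsteps F k' p q -> (k <= k')%N.
  by move=> h; rewrite leqNgt; apply/negP => /kmin.
case: (pselect (breach F p u)) => [/ex_minP [j [hj jmin]] | npu].
- case: (ltnP j k) => jk.
    by left; apply: arcE_first_reach e hj _ => k' /k_min; apply: leq_trans jk.
  right; move: hj; rewrite -(subnKC jk) => /bsteps_split [x [hx hqu]].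
  rewrite (bsteps_det hx hk) in hqu.
  apply: (arcE_first_reach e hqu) => k' hqp; rewrite ltnNge; apply/negP => le_k'.
  move: hqu; rewrite -(subnKC le_k') => /bsteps_split [y [hy hpu]].
  rewrite (bsteps_det hy hqp) in hpu.
  by apply: (jmin _ _ hpu); lia.
- have [m hm] : breach F u p.
    by case: (bd_connected (ex_intro _ w e) bp).
  have nqp : ~ breach F q p.
    move=> [k' hk']; apply: npu.
    by apply: (bsteps_cycle_reach _ (bsteps_add hk hk') hm); rewrite addn_gt0 k_gt0.
  right; split=> //; right; split=> //; right.
  case: m hm => [|m] /= hm; first by exfalso; apply: npu; exists 0%N.
  by case: hm => w' [e' hm]; exists m; rewrite (bedge_det e e').
Qed.

End Boundary.

(** * Comparison functions *)

Definition nbr_sum (h : R -> R -> R) (X Y : R) : R :=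
  h (X + 1) Y + h (X - 1) Y + h X (Y + 1) + h X (Y - 1).

Lemma sum_nbrs_shift (h : R -> R -> R) (ox oy : R) (B : Z2) :
  \sum_(C <- nbrs B) h (C.1%:~R + ox) (C.2%:~R + oy) =
  nbr_sum h (B.1%:~R + ox) (B.2%:~R + oy).
Proof.
rewrite /nbrs /nbr_sum !big_cons big_nil addr0 !addrA /= !intrB !intrD.
by congr (_ + _ + _ + _); congr h; ring.
Qed.

Lemma nbrs_snd (B C : Z2) : C \in nbrs B ->
  B.2%:~R - 1 <= C.2%:~R :> R /\ C.2%:~R <= B.2%:~R + 1 :> R.
Proof.
by rewrite /nbrs !inE => /or4P [] /eqP -> /=; rewrite ?intrB ?intrD; split; lra.
Qed.

(* A harmonic quadratic polynomial which is at least 1 beyond distance d in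
   the strip 0 <= y <= d + 1 (with Y = y + 1) and of order 1/d at Y = 1. *)
Definition disk_harm (d X Y : R) : R := (8 * d * Y + 2 * X ^+ 2 - 2 * Y ^+ 2) / d ^+ 2.

Lemma disk_harm_harmonic d X Y : 0 < d -> nbr_sum (disk_harm d) X Y = 4 * disk_harm d X Y.
Proof. by move=> d_gt0; rewrite /nbr_sum /disk_harm; field; rewrite gt_eqF. Qed.

Lemma disk_harm_ge0 d X Y : 0 < d -> 0 <= Y <= 4 * d -> 0 <= disk_harm d X Y.
Proof. by move=> d_gt0 /andP [Y_ge0 Y_le]; rewrite divr_ge0 //; nra. Qed.

Lemma disk_harm_ge1 d X y : 2 <= d -> 0 <= y <= d + 1 -> d ^+ 2 <= X ^+ 2 + y ^+ 2 ->
  1 <= disk_harm d X (y + 1).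
Proof.
move=> d_ge2 /andP [y_ge0 y_le] far; rewrite /disk_harm ler_pdivlMr; last by nra.
by rewrite mul1r; nra.
Qed.

Lemma disk_harm_origin d : 0 < d -> disk_harm d 0 1 <= 8 / d.
Proof.
move=> d_gt0; rewrite /disk_harm ler_pdivrMr; last by nra.
have -> : 8 / d * d ^+ 2 = 8 * d by field; rewrite gt_eqF.
nra.
Qed.

Definition far_bound (d : R) (B : Z2) : R :=
  if d <= dist0 B then 1 else disk_harm d B.1%:~R (B.2%:~R + 1).

(* A discrete analogue of the Poisson kernel Y / (X^2 + Y^2) of the half
   plane; the shift by 3 makes it superharmonic for the lattice Laplacian. *)
Definition half_kernel (X Y : R) : R := Y / (X ^+ 2 + Y ^+ 2 + 3).

Lemma half_kernel_ge0 X Y : 0 <= Y -> 0 <= half_kernel X Y.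
Proof. by move=> Y_ge0; rewrite divr_ge0 //; nra. Qed.

Lemma half_kernel_superharmonic X Y : 0 <= Y ->
  nbr_sum half_kernel X Y <= 4 * half_kernel X Y.
Proof.
move=> Y_ge0; rewrite /nbr_sum /half_kernel.
have d0 : 0 < X ^+ 2 + Y ^+ 2 + 3 by nra.
have d1 : 0 < (X + 1) ^+ 2 + Y ^+ 2 + 3 by nra.
have d2 : 0 < (X - 1) ^+ 2 + Y ^+ 2 + 3 by nra.
have d3 : 0 < X ^+ 2 + (Y + 1) ^+ 2 + 3 by nra.
have d4 : 0 < X ^+ 2 + (Y - 1) ^+ 2 + 3 by nra.
set P := 2 * X ^+ 4 + 10 * Y ^+ 4 + 44 * X ^+ 2 * Y ^+ 2 + 72 * X ^+ 2 + 96 * Y ^+ 2 + 224.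
set Den := ((X + 1) ^+ 2 + Y ^+ 2 + 3) * ((X - 1) ^+ 2 + Y ^+ 2 + 3) *
  (X ^+ 2 + (Y + 1) ^+ 2 + 3) * (X ^+ 2 + (Y - 1) ^+ 2 + 3) * (X ^+ 2 + Y ^+ 2 + 3).
have -> : 4 * (Y / (X ^+ 2 + Y ^+ 2 + 3)) =
    Y / ((X + 1) ^+ 2 + Y ^+ 2 + 3) + Y / ((X - 1) ^+ 2 + Y ^+ 2 + 3) +
    (Y + 1) / (X ^+ 2 + (Y + 1) ^+ 2 + 3) + (Y - 1) / (X ^+ 2 + (Y - 1) ^+ 2 + 3) +
    2 * Y * P / Den.
  rewrite /P /Den; field.
  by rewrite (gt_eqF d0) (gt_eqF d1) (gt_eqF d2) (gt_eqF d3) (gt_eqF d4).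
rewrite lerDl divr_ge0 // ?mulr_ge0 //; first by rewrite /P; nra.
all: exact: ltW.
Qed.

Lemma half_kernel_seg (N y : R) : 1 <= N -> 0 <= y <= N ->
  1 <= 4 * N * half_kernel 0 (y + 1).
Proof.
move=> N_ge1 /andP [y_ge0 y_le]; rewrite /half_kernel mulrA ler_pdivlMr; last by nra.
by rewrite mul1r; nra.
Qed.

Lemma half_kernel_origin (N K : R) : 0 <= N -> 1 <= K ^+ 2 ->
  4 * N * half_kernel (- K) 1 <= 4 * (N / K ^+ 2).
Proof.
move=> N_ge0 K_ge1; rewrite /half_kernel sqrrN expr1n mul1r mulrA.
rewrite ler_pdivrMr; last by lra.
rewrite mulrAC ler_pdivlMr; last by lra.
nra.
Qed.

Definition seg_bound (n : nat) (k : int) (B : Z2) : R :=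
  4 * n%:R * half_kernel (B.1%:~R - k%:~R) (B.2%:~R + 1).

Lemma seg_bound_ge0 n k B : -1 <= B.2%:~R :> R -> 0 <= seg_bound n k B.
Proof.
move=> y_ge; apply: mulr_ge0; first by rewrite mulr_ge0 ?ler0n.
by apply: half_kernel_ge0; lra.
Qed.

Lemma seg_bound_on_seg n k B : (0 < n)%N -> in_seg n k B -> 1 <= seg_bound n k B.
Proof.
case: B => x y n_gt0; rewrite /in_seg /seg_bound /= => /andP [/eqP -> /andP [y_ge0 y_le]].
rewrite subrr half_kernel_seg ?ler1n //.
by rewrite ler0z y_ge0 /= -(ler_int R) pmulrn in y_le *.
Qed.

Lemma seg_bound_superharmonic n k B : 0 <= B.2%:~R :> R ->
  \sum_(C <- nbrs B) seg_bound n k C <= 4 * seg_bound n k B.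
Proof.
move=> y_ge0; rewrite /seg_bound -mulr_sumr (sum_nbrs_shift half_kernel) mulrCA.
by rewrite ler_wpM2l ?half_kernel_superharmonic ?mulr_ge0 //; lra.
Qed.

(** * Hitting the wired arc *)

Section Domain.
Variables (F : set Z2) (a b : Z2).
Hypothesis D : dobrushinH F a b.

Lemma bedge_arcs u w : bedge F u w -> arcE F a b u w \/ arcE F b a u w.
Proof.
move=> e; have [hab|hba] := dh_connected D (dh_a D) (dh_b D).
  exact: (bedge_on_arcs (dh_simple D) (dh_connected D) (dh_a D) (dh_ab D) hab e).
rewrite or_comm.
exact: (bedge_on_arcs (dh_simple D) (dh_connected D) (dh_b D) (nesym (dh_ab D)) hba e).
Qed.

Lemma bedge_free u w : bedge F u w ->
  ~ wired F a b u \/ ~ wired F a b w -> arcE F a b u w.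
Proof.
move=> e nw; case: (bedge_arcs e) => // h; exfalso.
by case: nw; apply; right; right; [exists w; left | exists u; right].
Qed.

Lemma wired_Vb v : wired F a b v -> Vb F v.
Proof. exact: arcV_Vb (dh_b D) (dh_a D). Qed.

Lemma origin_Vb : Vb F origin.
Proof. exact: arcV_Vb (dh_a D) (dh_b D) (dh_origin D). Qed.

Lemma Vb_up x : Vb F (x,0) -> Vb F (x,1).
Proof.
have face_ge0 g : F g -> 0 <= g.2 by move=> h; apply: (dh_H D); exists g; split=> //; left.
case/Vb_cases => h; try by have := face_ge0 _ h.
all: by eexists; split; first exact: h; apply: corner_of => /=; lia.
Qed.

Lemma wired_nbr v : wired F a b v -> exists2 W, wired F a b W & W \in nbrs v.
Proof.
move=> wv; suff [W e] : exists W, arcE F b a v W \/ arcE F b a W v.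
  exists W; first by right; right; exists v; case: e; [right | left].
  by case: e => -[e _]; [exact: bedge_nbrs e | exact: nbrs_sym (bedge_nbrs e)].
have ba_gt0 k : bsteps F k b a -> (0 < k)%N.
  by case: k => // /(nesym (dh_ab D)).
case: wv => [->|[->|[w ew]]]; last by exists w; case: ew; [left | right].
- have [w e] := dh_b D; exists w; left.
  by apply: (arcE_first_reach (j := 0) e).
case: (pselect (breach F b a)) => [/ex_minP [k [hk kmin]] | nba].
- have := ba_gt0 _ hk; case: k hk kmin => // k hk kmin _.
  have [x [hx e]] := bsteps_last hk; exists x; right.
  apply: (arcE_first_reach e hx) => k' hk'.
  by rewrite ltnNge; apply/negP => /(kmin k'); apply.
- have [w0 /bedge_has_pred [u e]] := dh_a D; exists u; right.
  by split=> //; right; split=> //; right; exists 0%N.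
Qed.

Lemma added_of_exit B C : Vb F B -> ~ wired F a b B ->
  C \in nbrs B -> ~ Vb F C -> added F a b C.
Proof.
case: B => x y vB nwB hC nC; split=> //.
have [g [u [w [e uw cu cw cC]]]] := bedge_near_exit vB hC nC.
exists g, u, w; split=> //; apply: bedge_free e _.
by case: uw => <-; [left | right].
Qed.

Lemma rate_ge0 C : 0 <= rate F a b C.
Proof. by rewrite /rate; case: ifP => // _; case: ifP => // _; have := rho_ge1; lra. Qed.

(* Neighbours of an interior vertex lie in D or in the added layer. *)
Lemma rate_nbr_ge1 B C : Vb F B -> ~ wired F a b B -> C \in nbrs B ->
  1 <= rate F a b C.
Proof.
move=> vB nwB hC; rewrite /rate; case: (pselect (Vb F C)) => vC.
  by rewrite asboolT.
by rewrite asboolF // asboolT ?rho_ge1 //; exact: added_of_exit vB nwB hC vC.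
Qed.

Lemma sum_rate_ge4 B : Vb F B -> ~ wired F a b B ->
  4 <= \sum_(C <- nbrs B) rate F a b C.
Proof.
move=> vB nwB; apply: le_trans (_ : \sum_(C <- nbrs B) (1 : R) <= _).
  by rewrite /nbrs !big_cons big_nil; lra.
by rewrite big_seq [leRHS]big_seq; apply: ler_sum => C /(rate_nbr_ge1 vB nwB).
Qed.

Lemma hstep_nonVb n C : ~ Vb F C -> hstep F a b n C = 0.
Proof.
move=> nC; have nwC : ~ wired F a b C by move/wired_Vb.
by case: n => [|n] /=; rewrite asboolF // asboolF.
Qed.

Lemma hstep_le1 n B : hstep F a b n B <= 1.
Proof.
elim: n B => [|n IH] B /=; first by case: ifP.
case: ifP => // _; case: ifP => // _.
set tot := \sum_(C <- nbrs B) rate F a b C.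
apply: le_trans (_ : \sum_(C <- nbrs B) rate F a b C / tot <= _).
  apply: ler_sum => C _; rewrite ler_piMr ?IH //.
  by rewrite divr_ge0 ?rate_ge0 ?sumr_ge0 // => C' _; apply: rate_ge0.
by rewrite -mulr_suml -/tot; have [->|tn] := eqVneq tot 0; rewrite ?mul0r ?mulfV.
Qed.

(* Only the neighbours in D enter the superharmonicity condition: the walk
   cannot reach the wired arc from the added layer. *)
Definition supersolution (Q : Z2 -> Prop) (f : Z2 -> R) : Prop :=
  forall B, Q B -> f B < 1 -> [/\ ~ wired F a b B, 0 <= f B &
    Vb F B -> (forall C, C \in nbrs B -> Vb F C -> Q C) /\
              \sum_(C <- nbrs B | `[< Vb F C >]) f C <= 4 * f B].

Section Comparison.
Variables (Q : Z2 -> Prop) (f : Z2 -> R).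
Hypothesis super : supersolution Q f.

(* Since the total jump rate is at least 4, the jump chain weighs each
   neighbour in D by at most 1/4. *)
Lemma hstep_le_supersolution n B : Q B -> hstep F a b n B <= f B.
Proof.
elim: n B => [|n IH] B QB; have [f_ge1|f_lt1] := lerP 1 (f B);
  try exact: le_trans (hstep_le1 _ B) f_ge1.
  by case: (super QB f_lt1) => nwB fB0 _ /=; rewrite asboolF.
case: (super QB f_lt1) => nwB fB0 hV /=; rewrite asboolF //.
case: (pselect (Vb F B)) => vB; last by rewrite asboolF.
rewrite asboolT //; case: (hV vB) => QC sumf.
set tot := \sum_(C <- nbrs B) rate F a b C.
have tot_ge4 : 4 <= tot := sum_rate_ge4 vB nwB.
apply: le_trans (_ : (\sum_(C <- nbrs B | `[< Vb F C >]) f C) / tot <= _); last first.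
  rewrite ler_pdivrMr; last by lra.
  by apply: le_trans sumf _; rewrite [leRHS]mulrC; apply: ler_wpM2r.
rewrite [in X in _ <= X]big_mkcond mulr_suml big_seq [leRHS]big_seq; apply: ler_sum => C hC.
case: (pselect (Vb F C)) => vC; last by rewrite asboolF // hstep_nonVb // mulr0 mul0r.
rewrite asboolT // /rate asboolT // mul1r mulrC ler_wpM2r ?invr_ge0 ?IH //; [lra | exact: QC].
Qed.

Lemma HM_le_supersolution B : Q B -> HM F a b B <= f B.
Proof.
move=> QB; apply: ge_sup; first by exists (hstep F a b 0 B), 0%N.
by move=> _ [n _ <-]; apply: hstep_le_supersolution.
Qed.

End Comparison.

Lemma HM_le1 B : HM F a b B <= 1.
Proof.
by apply: (HM_le_supersolution (Q := setT) (f := fun=> 1)) => // C _; rewrite ltxx.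
Qed.

Lemma Vb_snd_ge0 v : Vb F v -> 0 <= v.2%:~R :> R.
Proof. by move=> vv; rewrite ler0z; exact: (dh_H D). Qed.

Lemma d1_le_dist0 v : wired F a b v -> d1 F a b <= dist0 v.
Proof.
have lb : has_lbound (dist0 @` wired F a b).
  by exists 0 => _ [u _ <-]; apply: sqrtr_ge0.
by move=> wv; apply: (ge_inf lb); exists v.
Qed.

Lemma far_bound_supersolution d : 2 <= d ->
  (forall v, wired F a b v -> d <= dist0 v) -> supersolution (Vb F) (far_bound d).
Proof.
move=> d_ge2 far_wired B vB; rewrite /far_bound; case: ifPn => [_|near _].
  by rewrite ltxx.
have y_ge0 := Vb_snd_ge0 vB.
have y_lt_d : B.2%:~R < d.
  have := dist0_sqr B; have := sqrtr_ge0 (B.1%:~R ^+ 2 + B.2%:~R ^+ 2 : R).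
  rewrite -ltNge in near; rewrite /dist0 in near *; nra.
have far_ge1 C : C \in nbrs B -> Vb F C -> d <= dist0 C ->
    1 <= disk_harm d C.1%:~R (C.2%:~R + 1).
  move=> /nbrs_snd [_ hi] vC far; apply: disk_harm_ge1; first lra.
    by rewrite Vb_snd_ge0 //=; lra.
  by rewrite -dist0_sqr; have := sqrtr_ge0 (C.1%:~R ^+ 2 + C.2%:~R ^+ 2 : R); nra.
have harm_ge0 C : C \in nbrs B -> 0 <= disk_harm d (C.1%:~R + 0) (C.2%:~R + 1).
  by move=> /nbrs_snd [lo hi]; apply: disk_harm_ge0; [lra | apply/andP; split; lra].
split.
- by move=> /far_wired h; rewrite h in near.
- by apply: disk_harm_ge0; [lra | apply/andP; split; lra].
move=> _; split=> [C _ //|].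
apply: le_trans (sum_filter_le (g := fun C => disk_harm d (C.1%:~R + 0) (C.2%:~R + 1)) _ _) _.
- move=> C hC /asboolP vC; rewrite addr0.
  by case: ifPn => [/(far_ge1 _ hC vC) | _].
- exact: harm_ge0.
- by rewrite sum_nbrs_shift disk_harm_harmonic ?addr0 //; lra.
Qed.

Lemma HM_far d : 2 <= d -> (forall v, wired F a b v -> d <= dist0 v) ->
  HM F a b origin <= 8 / d.
Proof.
move=> d_ge2 far.
apply: le_trans (HM_le_supersolution (far_bound_supersolution d_ge2 far) origin_Vb) _.
rewrite /far_bound (_ : dist0 origin = 0); last by rewrite /dist0 /= expr0n addr0 sqrtr0.
rewrite ifN -?ltNge //= ?add0r; last by lra.
by apply: disk_harm_origin; lra.
Qed.

Lemma HM_le_inv_d1 : 0 < d1 F a b -> HM F a b origin <= 8 / d1 F a b.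
Proof.
move=> d1_gt0; have [d1_le8|d1_gt8] := lerP (d1 F a b) 8.
  by apply: le_trans (HM_le1 _) _; rewrite ler_pdivlMr // mul1r.
by apply: HM_far d1_le_dist0; lra.
Qed.

Definition reach_before (P : pred Z2) (B : Z2) : Prop :=
  exists s : seq Z2, [/\ forall v, v \in origin :: s -> Vb F v, path nbr origin s,
                         last origin s = B & ~~ has P (belast origin s)].

Section Reach.
Variable P : pred Z2.

Lemma reach_origin : reach_before P origin.
Proof. by exists [::]; split=> // v; rewrite inE => /eqP ->; exact: origin_Vb. Qed.

Lemma reach_Vb B : reach_before P B -> Vb F B.
Proof. by case=> s [vs _ <- _]; apply: vs; apply: mem_last. Qed.

Lemma reach_step B C : reach_before P B -> ~~ P B -> Vb F C -> nbr B C ->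
  reach_before P C.
Proof.
case=> s [vs ps eB hs] nPB vC nBC; exists (rcons s C); split.
- by move=> v; rewrite -rcons_cons mem_rcons inE => /orP [/eqP -> // | /vs].
- by rewrite rcons_path ps eB.
- exact: last_rcons.
- by rewrite belast_rcons lastI has_rcons negb_or eB nPB hs.
Qed.

Lemma reach_pred B : reach_before P B -> B != origin ->
  exists B0, [/\ reach_before P B0, ~~ P B0 & nbr B0 B].
Proof.
case=> s [vs ps eB hs]; case/lastP: s vs ps eB hs => [|s C] vs ps eB hs.
  by rewrite -eB eqxx.
move: ps hs; rewrite last_rcons in eB; rewrite rcons_path belast_rcons eB.
rewrite lastI has_rcons negb_or => /andP [ps nbrB] /andP [hs nP0] _.
exists (last origin s); split=> //; exists s; split=> // v hv.
by apply: vs; rewrite -rcons_cons mem_rcons inE hv orbT.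
Qed.

End Reach.

Lemma reach_not_wired n k B : disconnects F a b n k ->
  reach_before (in_seg n k) B -> ~~ in_seg n k B -> ~ wired F a b B.
Proof.
move=> sep [s [vs ps eB hs]] nB wB; have := sep s vs ps; rewrite eB => /(_ wB).
by rewrite lastI has_rcons eB (negbTE hs) (negbTE nB).
Qed.

(* A one-point segment {(k,0)} on the bottom row does not separate: its
   neighbours in D are linked to each other through the row y = 1. *)
Lemma seg0_nbrs_reach k C : k != 0 -> reach_before (in_seg 0 k) (k,0) ->
  C \in nbrs (k,0) -> Vb F C -> reach_before (in_seg 0 k) C /\ ~~ in_seg 0 k C.
Proof.
set P := in_seg 0 k => k_neq0 reach_k hC vC.
have onP v : P v -> v = (k,0).
  by case: v => x y; rewrite /P /in_seg /= => /andP [/eqP -> /andP [? ?]]; congr pair; lia.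
pose strict v := reach_before P v /\ ~~ P v.
have step u v : strict u -> Vb F v -> nbr u v -> v <> (k,0) -> strict v.
  by move=> [ru nPu] vv uv nv; split; [exact: reach_step ru nPu vv uv | apply/negP => /onP].
have up x : strict (x,0) -> strict (x,1).
  move=> sx; apply: step sx (Vb_up (reach_Vb sx.1)) _ _; last by case.
  by rewrite /nbr /=; apply/eqP; lia.
have down x : strict (x,1) -> Vb F (x,0) -> x != k -> strict (x,0).
  move=> sx vx xk; apply: step sx vx _ _; last by case=> /eqP; rewrite (negbTE xk).
  by rewrite /nbr /=; apply/eqP; lia.
have over x x' : strict (x,1) -> Vb F (x',1) -> `|x - x'|%N = 1%N -> strict (x',1).
  move=> sx vx' dx; apply: step sx vx' _ _; last by case.
  by rewrite /nbr /=; apply/eqP; lia.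
have vk1 : Vb F (k,1) := Vb_up (reach_Vb reach_k).
have up_k : strict (k,1).
  have k0_neq : (k,0) != origin by rewrite xpair_eqE negb_and k_neq0.
  have [[x0 y0] [rB0 nPB0 /eqP /= B0k]] := reach_pred reach_k k0_neq.
  have y0_ge0 : 0 <= y0 := dh_H D (reach_Vb rB0).
  have [[ex ey]|[ey side]] : (x0 = k /\ y0 = 1) \/ (y0 = 0 /\ `|x0 - k|%N = 1%N) by lia.
    by rewrite ex ey in rB0 nPB0; split.
  by rewrite ey in rB0 nPB0; exact: over (up _ (conj rB0 nPB0)) vk1 side.
move: hC vC; rewrite /nbrs !inE => /or4P [] /eqP -> /= vC.
- by apply: down (over _ _ up_k (Vb_up vC) _) vC _; lia.
- by apply: down (over _ _ up_k (Vb_up vC) _) vC _; lia.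
- exact: up_k.
- by have := dh_H D vC.
Qed.

Lemma seg_bound_supersolution n k : k != 0 -> disconnects F a b n k ->
  supersolution (reach_before (in_seg n k)) (seg_bound n k).
Proof.
move=> k_neq0 sep B rB f_lt1.
have vB := reach_Vb rB; have y_ge0 := Vb_snd_ge0 vB.
have f_ge0 : 0 <= seg_bound n k B by apply: seg_bound_ge0; lra.
have sum_le : \sum_(C <- nbrs B | `[< Vb F C >]) seg_bound n k C <= 4 * seg_bound n k B.
  apply: le_trans (seg_bound_superharmonic n k y_ge0); apply: sum_filter_le => // C.
  by move=> /nbrs_snd [lo _]; apply: seg_bound_ge0; lra.
have [segB|nsegB] := boolP (in_seg n k B); last first.
  split=> //; first exact: reach_not_wired sep rB nsegB.
  by move=> _; split=> // C hC vC; exact: reach_step rB nsegB vC (nbr_of_nbrs hC).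
have [n0|n_gt0] := posnP n; last first.
  by have := seg_bound_on_seg n_gt0 segB; rewrite leNgt f_lt1.
subst n; have eB : B = (k,0).
  case: B segB {rB vB y_ge0 sum_le f_ge0 f_lt1} => x y.
  by move=> /andP [/eqP /= -> /andP [? ?]]; congr pair; lia.
subst B; split=> //.
- move=> /wired_nbr [W wW /seg0_nbrs_reach] => /(_ k_neq0 rB (wired_Vb wW)) [rW nW].
  exact: reach_not_wired sep rW nW wW.
- by move=> _; split=> // C hC vC; case: (seg0_nbrs_reach k_neq0 rB hC vC).
Qed.

Lemma HM_le_seg n k : k != 0 -> disconnects F a b n k ->
  HM F a b origin <= 4 * (n%:R / (`|k| ^+ 2)%:~R).
Proof.
move=> k_neq0 sep.
apply: le_trans (HM_le_supersolution (seg_bound_supersolution k_neq0 sep) (reach_origin _)) _.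
rewrite /seg_bound /= sub0r add0r real_normK ?num_real // rmorphXn.
apply: half_kernel_origin; first exact: ler0n.
by rewrite -rmorphXn ler1z; lia.
Qed.

End Domain.

Theorem lemma8 :
  exists c3 c4 : R, 0 < c3 /\ 0 < c4 /\
    forall (F : set Z2) (a b : Z2), dobrushinH F a b ->
      (0 < d1 F a b -> HM F a b origin <= c3 / d1 F a b) /\
      (forall (n : nat) (k : int), k != 0 -> disconnects F a b n k ->
         HM F a b origin <= c4 * (n%:R / (`|k| ^+ 2)%:~R)).
Proof.
exists 8, 4; do 2!split => //; move=> F a b D; split.
- exact: HM_le_inv_d1.
- exact: HM_le_seg.
Qed.
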